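(* Let $(\mathcal{V},\mathcal{E})$ be a finite connected undirected graph that is a tree (each edge usable in both directions, so $(i,j)\in\mathcal{E}$ iff $(j,i)\in\mathcal{E}$), and for $i\in\mathcal{V}$ let $\mathrm{ne}(i)$ be the set of neighbours of $i$ (excluding $i$). Let $\{F^{v}\}_{v\in\mathcal{V}}$ be $d\times d$ matrices. For every ordered edge $(i,j)\in\mathcal{E}$ let $\theta^{i,j}\in\mathbb{R}^{d}$ be given, set $\theta^{i,i}=0$ for all $i$, and for arbitrary nodes $i,j$ joined by the unique tree path $i=j_0,j_1,\dots,j_{m+1}=j$ define $\theta^{i,j}=\theta^{j_0,j_1}+\theta^{j_1,j_2}+\dots+\theta^{j_m,j_{m+1}}$. Define messages for every ordered edge $(i,j)\in\mathcal{E}$ by $m_{1}^{i,j}=F^{i}$, $\ddot m_{1}^{i,j}=F^{i}\theta^{j,i}$, and for $k=2,\dots,K$: $$m_{k}^{i,j}=F^{i}+\sum_{p\in\mathrm{ne}(i)\setminus\{j\}}m_{k-1}^{p,i},\qquad \ddot m_{k}^{i,j}=m_{k}^{i,j}\theta^{j,i}+\sum_{p\in\mathrm{ne}(i)\setminus\{j\}}\ddot m_{k-1}^{p,i}.$$ If $K$ is at least the number of edges on the path between the two farthest nodes of the network (the diameter of the tree), then for every node $r\in\mathcal{V}$, $$\sum_{v\in\mathcal{V}}F^{v}=F^{r}+\sum_{j\in\mathrm{ne}(r)}m_{K}^{j,r}\qquad\text{and}\qquad \sum_{v\in\mathcal{V}}F^{v}\theta^{r,v}=\sum_{j\in\mathrm{ne}(r)}\ddot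 m_{K}^{j,r}.$$
   Context: This is the message-passing scheme of a sensor network at a fixed time $n$ (the time index is suppressed): $\theta^{i,j}$ plays the role of the (estimated) position of node $i$ in the local coordinate system of node $j$, and the additivity of $\theta$ along paths is the relation $\theta^{i,j}=\theta^{i,j_1}+\theta^{j_1,j_2}+\dots+\theta^{j_m,j}$ for nodes connected through intermediate nodes $j_1,\dots,j_m$. The message $m_k^{i,j}$, $\ddot m_k^{i,j}$ is the one sent from node $i$ to node $j$ at iteration $k$. *)

From HB Require Import structures.
From mathcomp Require Import all_boot all_order all_algebra.
Set Implicit Arguments. Unset Strict Implicit. Unset Printing Implicit Defensive.
Import Order.TTheory GRing.Theory Num.Theory.
Local Open Scope ring_scope.

Definition undirected (V : finType) (e : rel V) : Prop :=
  symmetric e /\ irreflexive e.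

(* Simple (vertex-repeating-free) e-path from i: i :: p, with p the list of
   subsequent vertices; its endpoint is last i p and it has size p edges. *)
Definition simple_path (V : finType) (e : rel V) (i : V) (p : seq V) : bool :=
  path e i p && uniq (i :: p).

Definition is_tree (V : finType) (e : rel V) : Prop :=
  undirected e /\
  (forall i j : V, connect e i j) /\
  (forall (i : V) (p q : seq V), simple_path e i p -> simple_path e i q ->
     last i p = last i q -> p = q).

Definition diameter_le (V : finType) (e : rel V) (K : nat) : Prop :=
  forall (i : V) (p : seq V), simple_path e i p -> (size p <= K)%N.

(* theta is given on ordered edges and extended to all pairs of nodes by
   summation along the unique tree path i = j0, j1, ..., j_{m+1} = j;
   in particular theta i i = 0 (empty path). *)
Definition path_additive (R : nzRingType) (d : nat) (V : finType) (e : rel V)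
  (theta : V -> V -> 'cV[R]_d) : Prop :=
  forall (i : V) (p : seq V), simple_path e i p ->
    theta i (last i p) = \sum_(x <- zip (i :: p) p) theta x.1 x.2.

(* Messages m_k^{i,j} (k >= 1; value at k = 0 is an unused dummy). *)
Fixpoint msg (R : nzRingType) (d : nat) (V : finType) (e : rel V)
  (F : V -> 'M[R]_d) (k : nat) (i j : V) {struct k} : 'M[R]_d :=
  match k with
  | 0 => 0
  | 1 => F i
  | k'.+1 => F i + \sum_(p : V | e i p && (p != j)) msg e F k' p i
  end.

(* Messages \ddot m_k^{i,j} (k >= 1; value at k = 0 is an unused dummy). *)
Fixpoint mdd (R : nzRingType) (d : nat) (V : finType) (e : rel V)
  (F : V -> 'M[R]_d) (theta : V -> V -> 'cV[R]_d) (k : nat) (i j : V)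
  {struct k} : 'cV[R]_d :=
  match k with
  | 0 => 0
  | 1 => F i *m theta j i
  | k'.+1 => msg e F k i j *m theta j i
             + \sum_(p : V | e i p && (p != j)) mdd e F theta k' p i
  end.

From HB Require Import structures.
From mathcomp Require Import all_boot all_order all_algebra.
Import GRing.Theory.
Local Open Scope ring_scope.
Set Implicit Arguments. Unset Strict Implicit.

(* Unfolding the recursion, m_k^{i,j} is the sum of F^v over the nodes v of
   the subtree hanging off the edge j -> i at distance < k from i, and
   \ddot m_k^{i,j} is the sum of F^v theta^{j,v} over the same nodes, because
   theta^{j,v} = theta^{j,i} + theta^{i,v} there. Uniqueness of tree paths
   makes the subtrees at a node pairwise disjoint, and once k reaches the
   diameter the subtrees at r together with r itself cover the whole tree. *)

Lemma sum_partition_with_point (T I : finType) (M : nmodType) (A : pred T) (P : pred I)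
    (B : I -> pred T) (c : T) (G : T -> M) :
  A c ->
  (forall p v, P p -> B p v -> A v && (v != c)) ->
  (forall v, A v -> v != c -> exists2 p, P p & B p v) ->
  (forall p p' v, P p -> P p' -> B p v -> B p' v -> p = p') ->
  \sum_(v | A v) G v = G c + \sum_(p | P p) \sum_(v | B p v) G v.
Proof.
move=> Ac inA cover disj; rewrite (bigD1 c) //=; congr (_ + _).
rewrite (exchange_big_dep (fun v => A v && (v != c))) /=; last exact: inA.
apply: eq_bigr => v /andP[Av vc]; have [p Pp Bpv] := cover v Av vc.
rewrite (bigD1 p) ?Pp //= big1 ?addr0 // => p' /andP[/andP[Pp' Bp'v] p'p].
by rewrite (disj _ _ _ Pp' Pp Bp'v Bpv) eqxx in p'p.
Qed.

Section Branch.
Variables (V : finType) (e : rel V).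

(* [branch k j i]: the nodes at distance < k from i in the subtree hanging off
   the edge j -> i. *)
Fixpoint branch (k : nat) (j i v : V) {struct k} : bool :=
  if k is k'.+1 then (v == i) || [exists p, [&& e i p, p != j & branch k' i p v]]
  else false.

Lemma branchS k j i v :
  branch k.+1 j i v = (v == i) || [exists p, [&& e i p, p != j & branch k i p v]].
Proof. by []. Qed.

Lemma simple_path_cons j i q :
  simple_path e j (i :: q) = [&& e j i, j \notin i :: q & simple_path e i q].
Proof. by rewrite /simple_path cons_uniq andbACA -andbA. Qed.

Lemma simple_path_branch k j i q :
  simple_path e j (i :: q) -> (size q < k)%N -> branch k j i (last i q).
Proof.
elim: q k j i => [|p q IHq] [|k] j i //; first by rewrite branchS /= eqxx.
rewrite simple_path_cons => /and3P[_ jipq spq] ltqk.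
move: (spq); rewrite simple_path_cons => /and3P[eip _ _].
have jp : p != j by apply: contraNneq jipq => ->; rewrite !inE eqxx orbT.
rewrite branchS; apply/orP; right; apply/existsP; exists p.
rewrite eip jp /=; exact: IHq.
Qed.

Hypothesis e_tree : is_tree e.
Let e_sym : symmetric e := proj1 (proj1 e_tree).
Let e_irr : irreflexive e := proj2 (proj1 e_tree).
Let e_conn : forall i j, connect e i j := proj1 (proj2 e_tree).
Let e_path_uniq : forall i p q, simple_path e i p -> simple_path e i q ->
  last i p = last i q -> p = q := proj2 (proj2 e_tree).

Lemma edge_simple_path i j : e i j -> simple_path e i [:: j].
Proof.
move=> eij; rewrite /simple_path /= eij /= inE andbT.
by apply: contraTneq eij => ->; rewrite e_irr.
Qed.

Lemma simple_path_notin_neighbour i j p q :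
  e i j -> simple_path e i (p :: q) -> p != j -> j \notin p :: q.
Proof.
move=> eij spq pj; rewrite inE negb_or eq_sym pj /=; apply/negP => jq.
move: spq; case/path.splitP: jq => q1 q2.
rewrite /simple_path -!cat_cons cat_path cat_uniq => /andP[/andP[path1 _] /andP[uniq1 _]].
have sp1 : simple_path e i (p :: rcons q1 j) by rewrite /simple_path path1.
have := e_path_uniq (edge_simple_path eij) sp1; rewrite /= last_rcons => /(_ erefl).
by case=> pj'; rewrite pj' eqxx in pj.
Qed.

Lemma branch_simple_path k j i v :
  e j i -> branch k j i v -> exists2 q, simple_path e j (i :: q) & last i q = v.
Proof.
elim: k j i => [|k IHk] j i eji //; rewrite branchS.
case/orP => [/eqP-> | /existsP[p /and3P[eip pj /(IHk i p eip)[q spq <-]]]].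
  by exists [::]; first exact: edge_simple_path.
exists (p :: q) => //; rewrite simple_path_cons eji spq andbT.
have eij : e i j by rewrite e_sym.
rewrite inE negb_or (simple_path_notin_neighbour eij spq pj) andbT.
by apply: contraTneq eji => ->; rewrite e_irr.
Qed.

Lemma branch_neq_root k j i v : e j i -> branch k j i v -> v != j.
Proof.
move=> eji /(branch_simple_path eji)[q]; rewrite simple_path_cons => /and3P[_ jq _] <-.
by apply: contraNneq jq => <-; apply: mem_last.
Qed.

Lemma branch_edge_uniq k k' j i i' v :
  e j i -> e j i' -> branch k j i v -> branch k' j i' v -> i = i'.
Proof.
move=> eji eji' /(branch_simple_path eji)[q spq qv] /(branch_simple_path eji')[q' spq' q'v].
by case: (e_path_uniq spq spq' (etrans qv (esym q'v))).
Qed.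

Lemma branch_cover_root K r v :
  diameter_le e K -> v != r -> exists2 j, e r j & branch K r j v.
Proof.
move=> diamK; case/connectP: (e_conn r v) => p /shortenP[[|j q] pjq uq _ ->].
  by rewrite eqxx.
have spq : simple_path e r (j :: q) by rewrite /simple_path pjq.
move: (spq); rewrite simple_path_cons => /and3P[erj _ _] _.
by exists j => //; apply: simple_path_branch; last exact: diamK spq.
Qed.

Lemma sum_branchS (M : nmodType) (G : V -> M) k j i :
  \sum_(v | branch k.+1 j i v) G v =
  G i + \sum_(p | e i p && (p != j)) \sum_(v | branch k i p v) G v.
Proof.
apply: sum_partition_with_point => [|p v /andP[eip pj] bv|v|p p' v /andP[eip _] /andP[eip' _]].
- by rewrite branchS eqxx.
- rewrite (branch_neq_root eip bv) andbT branchS; apply/orP; right.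
  by apply/existsP; exists p; rewrite eip pj bv.
- rewrite branchS => /orP[/eqP->|/existsP[p /and3P[eip pj bv]]]; first by rewrite eqxx.
  by exists p; rewrite ?eip ?pj.
- exact: branch_edge_uniq.
Qed.

Lemma sum_root_branches (M : nmodType) (G : V -> M) K r :
  diameter_le e K ->
  \sum_v G v = G r + \sum_(j | e r j) \sum_(v | branch K r j v) G v.
Proof.
move=> diamK.
apply: (sum_partition_with_point (A := predT)) => // [j v erj bv|v _ vr|]; last exact: branch_edge_uniq.
  exact: branch_neq_root erj bv.
exact: branch_cover_root.
Qed.

End Branch.

Section Messages.
Variables (R : nzRingType) (d : nat) (V : finType) (e : rel V).
Variables (F : V -> 'M[R]_d) (theta : V -> V -> 'cV[R]_d).

Lemma msgS k i j :
  msg e F k.+1 i j = F i + \sum_(p | e i p && (p != j)) msg e F k p i.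
Proof. by case: k => [|k] //=; rewrite big1 ?addr0. Qed.

Lemma mddS k i j :
  mdd e F theta k.+1 i j =
  msg e F k.+1 i j *m theta j i + \sum_(p | e i p && (p != j)) mdd e F theta k p i.
Proof. by case: k => [|k] //=; rewrite big1 ?addr0. Qed.

Hypothesis theta_add : path_additive e theta.

Lemma path_additive_diag i : theta i i = 0.
Proof. by rewrite (theta_add (p := [::])) ?big_nil. Qed.

Lemma path_additive_cons j i q :
  simple_path e j (i :: q) -> theta j (last i q) = theta j i + theta i (last i q).
Proof.
move=> spq; rewrite (theta_add spq) big_cons -(theta_add (p := q)) //.
by move: spq; rewrite simple_path_cons => /and3P[].
Qed.

Hypothesis e_tree : is_tree e.

Lemma msg_branch k i j : msg e F k i j = \sum_(v | branch e k j i v) F v.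
Proof.
elim: k i j => [|k IHk] i j; first by rewrite big_pred0.
rewrite msgS (sum_branchS e_tree); congr (_ + _).
by apply: eq_bigr => p _; apply: IHk.
Qed.

Lemma mdd_branch k i j :
  e j i -> mdd e F theta k i j = \sum_(v | branch e k j i v) F v *m theta j v.
Proof.
elim: k i j => [|k IHk] i j eji; first by rewrite big_pred0.
have theta_split v : branch e k.+1 j i v -> theta j v = theta j i + theta i v.
  by case/(branch_simple_path e_tree eji) => q spq <-; apply: path_additive_cons.
rewrite mddS [RHS](eq_bigr (fun v => F v *m theta j i + F v *m theta i v)); last first.
  by move=> v bv; rewrite theta_split // mulmxDr.
rewrite big_split -mulmx_suml -msg_branch; congr (_ + _).
rewrite (sum_branchS e_tree) path_additive_diag mulmx0 add0r.
by apply: eq_bigr => p /andP[eip _]; apply: IHk.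
Qed.

End Messages.

Unset Implicit Arguments. Set Strict Implicit.
Theorem lemma1 (R : realFieldType) (d : nat) (V : finType) (e : rel V)
  (F : V -> 'M[R]_d) (theta : V -> V -> 'cV[R]_d) (K : nat) :
  is_tree e ->
  path_additive e theta ->
  diameter_le e K ->
  forall r : V,
    \sum_(v : V) F v = F r + \sum_(j : V | e r j) msg e F K j r /\
    \sum_(v : V) F v *m theta r v = \sum_(j : V | e r j) mdd e F theta K j r.
Proof.
move=> tree theta_add diamK r; split.
  rewrite (sum_root_branches tree F r diamK); congr (_ + _).
  by apply: eq_bigr => j _; rewrite (msg_branch F tree).
rewrite (sum_root_branches tree _ r diamK) (path_additive_diag theta_add) mulmx0 add0r.
by apply: eq_bigr => j erj; rewrite (mdd_branch F theta_add tree).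
Qed.
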